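(* Let $P=\{p_1,p_2,p_3,p_4\}$ and $Q=\{q_1,q_2,q_3,q_4\}$ be two 4-point subsets of the Riemann sphere $\widehat{\mathbb{C}}$, each in general position (its four points do not lie on a common generalized circle). Then $P$ and $Q$ are Möbius equivalent (there is a Möbius transformation mapping $P$ onto $Q$) if and only if their shapes have the same angles.
   Context: Generalized circles are circles and straight lines (the latter completed by $\infty$) in $\widehat{\mathbb{C}}$; any three distinct points lie on exactly one. For a 4-point set $P=\{p_1,\dots,p_4\}$ in general position and each $l\in\{1,2,3,4\}$, the curvilinear triangle $T_l$ has as vertices the three points $p_i$, $i\ne l$; its side joining $p_i$ and $p_j$ ($i,j\neq l$) is the arc, with endpoints $p_i,p_j$, of the generalized circle through $p_i,p_j,p_l$ that does not contain $p_l$. Each $T_l$ is regarded as an oriented curvilinear triangle, its vertices read in the positive (counterclockwise) orientation induced by the orientation of the sphere, and its angles are the angles at its three vertices taken in this cyclic order (when one point is $\infty$, the triangle on the three finite points is an ordinary Euclidean triangle, positively oriented, and the others are bounded by an arc and two rays). The four triangles $T_1,\dots,T_4$ have the same oriented angles, and the shape of $P$ is this oriented curvilinear triangle (with its cyclically ordered angles). ''The shapes have the same angles'' means the cyclically ordered triples of angles of the shapes of $P$ and $Q$ coincide up to cyclic permutation. *)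

From Stdlib Require Import Reals List.
From Coquelicot Require Import Coquelicot.
Import ListNotations.
Open Scope R_scope.

(** The Riemann sphere: [Some z] is the finite point z, [None] is infinity. *)
Definition sphere := option C.

Definition Ceq_dec (x y : C) : {x = y} + {x <> y}.
Proof.
  destruct x as [a b], y as [c d].
  destruct (Req_EM_T a c) as [H1|H1]; destruct (Req_EM_T b d) as [H2|H2];
    subst; [left; reflexivity | right | right | right]; intro H; inversion H; auto.
Defined.

Definition mobius_app (a b c d : C) (p : sphere) : sphere :=
  match p with
  | Some z => if Ceq_dec (c * z + d)%C 0%C then None
              else Some ((a * z + b) / (c * z + d))%C
  | None => if Ceq_dec c 0%C then None else Some (a / c)%C
  end.

Definition mobius_equivalent (P Q : list sphere) : Prop :=
  exists a b c d : C, (a * d - b * c)%C <> 0%C /\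
    (forall x, In x P -> In (mobius_app a b c d x) Q) /\
    (forall y, In y Q -> exists x, In x P /\ mobius_app a b c d x = y).

Definition on_circle (c : C) (r : R) (p : sphere) : Prop :=
  match p with Some z => Cmod (z - c)%C = r | None => False end.

Definition on_line (u : C) (s : R) (p : sphere) : Prop :=
  match p with Some z => Re (Cconj u * z)%C = s | None => True end.

Definition on_common_gcircle (P : list sphere) : Prop :=
  (exists (c : C) (r : R), 0 < r /\ List.Forall (on_circle c r) P) \/
  (exists (u : C) (s : R), u <> 0%C /\ List.Forall (on_line u s) P).

Definition general_position4 (p1 p2 p3 p4 : sphere) : Prop :=
  NoDup [p1; p2; p3; p4] /\ ~ on_common_gcircle [p1; p2; p3; p4].

(** Tangent vector, at the vertex [pi], of the arc with endpoints [pi], [pj]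
    of the generalized circle through [pi], [pj], [pl] that does not contain
    [pl] (pointing from [pi] into the arc).  At a finite vertex zi one uses
    the coordinate w = 1/(z - zi): the circle becomes the straight line through
    w_j and w_l, and the arc becomes the ray from w_j to infinity away from
    w_l, i.e. w = w_j + t (w_j - w_l), t -> +oo; hence z - zi ~ 1/(t (w_j - w_l))
    and the tangent direction at zi is 1/(w_j - w_l) (w = 0 for z = oo).  At
    the vertex oo one uses the (orientation-compatible) chart zeta = 1/z, in
    which the same computation at zeta = 0 gives w = z (and w = 0 for z = 0
    is consistent).  Only the direction of this vector matters. *)
Definition arc_tangent (pi pj pl : sphere) : C :=
  let w (m : sphere) : C :=
    match pi, m with
    | Some zi, Some zm => Cinv (zm - zi)%C
    | None, Some zm => zm
    | _, None => 0%C
    end in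
  Cinv (w pj - w pl)%C.

Definition vec_angle (u v : C) : R :=
  acos (Re (Cconj u * v)%C / (Cmod u * Cmod v)).

Definition ccw (u v : C) : Prop := 0 < Im (Cconj u * v)%C.

(** The shape of the ordered 4-tuple (p1,p2,p3,p4): the oriented curvilinear
    triangle T_4 with vertices p1, p2, p3 (sides on the generalized circles
    through p4), given by its three angles listed in the positive
    (counterclockwise) cyclic order of its vertices. *)
Definition shape_angles (p1 p2 p3 p4 : sphere) : R * R * R :=
  let a1 := vec_angle (arc_tangent p1 p2 p4) (arc_tangent p1 p3 p4) in
  let a2 := vec_angle (arc_tangent p2 p3 p4) (arc_tangent p2 p1 p4) in
  let a3 := vec_angle (arc_tangent p3 p1 p4) (arc_tangent p3 p2 p4) in
  if Rlt_dec 0 (Im (Cconj (arc_tangent p1 p2 p4) * arc_tangent p1 p3 p4)%C)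
  then (a1, a2, a3)
  else (a1, a3, a2).

Definition cyclic_eq (t t' : R * R * R) : Prop :=
  match t with (a, b, c) => t' = (a, b, c) \/ t' = (b, c, a) \/ t' = (c, a, b) end.

(* Everything is governed by the cross ratio l of (p1, p2, p3, p4).  The
   angles of the shape at p1, p2, p3 are the absolute arguments of l,
   1/(1 - l) and 1 - 1/l, and its orientation is the sign of Im l.  Möbius
   maps preserve l, while reordering the four points moves l within its orbit
   under l |-> 1 - l and l |-> 1/l, which only rotates the angle triple.
   General position forces Im l <> 0: a real cross ratio puts the points on
   the preimage of the extended real line under a Möbius map.  Conversely, in
   the upper half-plane the angles of l and of 1/(1 - l) determine the rays
   from 0 and from 1 through l, hence l itself; so equal shapes give equal
   cross ratios after reordering, and equal cross ratios give a Möbius map. *)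

From Pilot Require Import Defs.
From Stdlib Require Import Reals List Permutation Lra.
From Coquelicot Require Import Coquelicot.
Import ListNotations.
Open Scope C_scope.

Ltac split_C H :=
  let Hre := fresh H "re" in let Him := fresh H "im" in
  assert (Hre := f_equal Re H); assert (Him := f_equal Im H); clear H;
  simpl in Hre, Him.

Lemma C1_neq0 : (1 : C) <> 0.
Proof. intro E. split_C E. lra. Qed.

Lemma Cinv_neq0 (a : C) : a <> 0 -> / a <> 0.
Proof.
  intros Ha E. apply C1_neq0. rewrite <- (Cinv_r a Ha), E. ring.
Qed.

(** * Homogeneous coordinates and the cross ratio *)

(** [p = hnum p / hden p], with [1 / 0 = oo]. *)
Definition hnum (p : sphere) : C := match p with Some z => z | None => 1 end.
Definition hden (p : sphere) : C := match p with Some _ => 1 | None => 0 end.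

Definition bracket (p q : sphere) : C := hnum p * hden q - hden p * hnum q.

Lemma bracket_eq0 (p q : sphere) : bracket p q = 0 <-> p = q.
Proof.
  split; [| intros ->; unfold bracket; ring].
  destruct p as [a|], q as [b|]; unfold bracket; simpl; intro E.
  - f_equal. apply Ceq_minus. rewrite <- E. ring.
  - destruct a. split_C E. lra.
  - destruct b. split_C E. lra.
  - reflexivity.
Qed.

Lemma bracket_neq0 (p q : sphere) : p <> q -> bracket p q <> 0.
Proof. intros H E. now apply H, bracket_eq0. Qed.

Definition distinct4 (p1 p2 p3 p4 : sphere) : Prop :=
  p1 <> p2 /\ p1 <> p3 /\ p1 <> p4 /\ p2 <> p3 /\ p2 <> p4 /\ p3 <> p4.

Lemma NoDup_distinct4 (p1 p2 p3 p4 : sphere) :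
  NoDup [p1; p2; p3; p4] -> distinct4 p1 p2 p3 p4.
Proof.
  intro H. inversion_clear H as [|? ? N1 H1]. inversion_clear H1 as [|? ? N2 H2].
  inversion_clear H2 as [|? ? N3 _]. simpl in *.
  repeat split; intro E; subst; tauto.
Qed.

Ltac brackets_neq0 :=
  repeat match goal with
  | H : ?a <> ?b |- _ =>
      let B1 := fresh "B" in let B2 := fresh "B" in
      assert (B1 := bracket_neq0 a b H);
      assert (B2 := bracket_neq0 b a (not_eq_sym H)); clear H
  end.

Ltac distinct_brackets D :=
  let D' := fresh in assert (D' := D); destruct D' as (?&?&?&?&?&?); brackets_neq0.

Ltac C_nonzero := unfold Cdiv; repeat (apply Cmult_neq_0 || apply Cinv_neq0); auto.

Ltac bracket_field := field_simplify_eq; [unfold bracket; ring | repeat split; auto].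

Ltac neq0_by_ring :=
  cbv beta; repeat split; try assumption;
  match goal with
  | |- ?x <> ?z =>
      let from H :=
        let E := fresh in
        first [ intro E; apply H; transitivity x; [ring | exact E]
              | intro E; apply H; transitivity (- x); [ring | rewrite E; ring] ] in
      first [ from C1_neq0 | match goal with H : _ <> z |- _ => from H end ]
  end.

Definition mobius_scale (a b c d : C) (p : sphere) (k : C) : Prop :=
  k <> 0 /\
  hnum (mobius_app a b c d p) = k * (a * hnum p + b * hden p) /\
  hden (mobius_app a b c d p) = k * (c * hnum p + d * hden p).

Lemma mobius_scale_exists (a b c d : C) (p : sphere) :
  a * d - b * c <> 0 -> exists k : C, mobius_scale a b c d p k.
Proof.
  intro Hdet. unfold mobius_scale. destruct p as [z|]; unfold mobius_app.
  - destruct (Defs.Ceq_dec (c * z + d) 0) as [E|E]; unfold hnum, hden.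
    + assert (N : a * z + b <> 0).
      { intro F. apply Hdet.
        replace d with (c * z + d - c * z) by ring. rewrite E.
        replace b with (a * z + b - a * z) by ring. rewrite F. ring. }
      exists (/ (a * z + b)). split; [C_nonzero |].
      rewrite !Cmult_1_r, E. split; [field; auto | ring].
    + exists (/ (c * z + d)). split; [C_nonzero |]. split; field; auto.
  - destruct (Defs.Ceq_dec c 0) as [E|E]; unfold hnum, hden.
    + subst c. assert (N : a <> 0) by (intro F; apply Hdet; rewrite F; ring).
      exists (/ a). split; [C_nonzero |]. split; field; auto.
    + exists (/ c). split; [C_nonzero |]. split; field; auto.
Qed.

Lemma bracket_mobius (a b c d : C) (p q : sphere) (kp kq : C) :
  mobius_scale a b c d p kp -> mobius_scale a b c d q kq ->
  bracket (mobius_app a b c d p) (mobius_app a b c d q)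
  = kp * kq * (a * d - b * c) * bracket p q.
Proof.
  intros (_ & Np & Dp) (_ & Nq & Dq). unfold bracket. rewrite Np, Dp, Nq, Dq. ring.
Qed.

Definition cross_ratio (p1 p2 p3 p4 : sphere) : C :=
  bracket p3 p1 * bracket p4 p2 / (bracket p2 p1 * bracket p4 p3).

Lemma cross_ratio_mobius (a b c d : C) (p1 p2 p3 p4 : sphere) :
  a * d - b * c <> 0 -> distinct4 p1 p2 p3 p4 ->
  cross_ratio (mobius_app a b c d p1) (mobius_app a b c d p2)
              (mobius_app a b c d p3) (mobius_app a b c d p4)
  = cross_ratio p1 p2 p3 p4.
Proof.
  intros Hdet D. distinct_brackets D. unfold cross_ratio.
  destruct (mobius_scale_exists a b c d p1 Hdet) as (k1 & S1).
  destruct (mobius_scale_exists a b c d p2 Hdet) as (k2 & S2).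
  destruct (mobius_scale_exists a b c d p3 Hdet) as (k3 & S3).
  destruct (mobius_scale_exists a b c d p4 Hdet) as (k4 & S4).
  rewrite (bracket_mobius _ _ _ _ _ _ _ _ S3 S1), (bracket_mobius _ _ _ _ _ _ _ _ S4 S2),
    (bracket_mobius _ _ _ _ _ _ _ _ S2 S1), (bracket_mobius _ _ _ _ _ _ _ _ S4 S3).
  destruct S1 as [? _], S2 as [? _], S3 as [? _], S4 as [? _].
  field. repeat split; auto.
Qed.

Lemma cross_ratio_neq0 (p1 p2 p3 p4 : sphere) :
  distinct4 p1 p2 p3 p4 -> cross_ratio p1 p2 p3 p4 <> 0.
Proof. intro D. distinct_brackets D. unfold cross_ratio. C_nonzero. Qed.

Lemma one_sub_cross_ratio (p1 p2 p3 p4 : sphere) : distinct4 p1 p2 p3 p4 ->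
  1 - cross_ratio p1 p2 p3 p4 = bracket p2 p3 * bracket p4 p1 / (bracket p2 p1 * bracket p4 p3).
Proof. intro D. distinct_brackets D. unfold cross_ratio. bracket_field. Qed.

Lemma cross_ratio_swap12 (p1 p2 p3 p4 : sphere) : distinct4 p1 p2 p3 p4 ->
  cross_ratio p2 p1 p3 p4 = 1 - cross_ratio p1 p2 p3 p4.
Proof. intro D. distinct_brackets D. unfold cross_ratio. bracket_field. Qed.

Lemma cross_ratio_swap23 (p1 p2 p3 p4 : sphere) : distinct4 p1 p2 p3 p4 ->
  cross_ratio p1 p3 p2 p4 = / cross_ratio p1 p2 p3 p4.
Proof. intro D. distinct_brackets D. unfold cross_ratio. bracket_field. Qed.

Lemma cross_ratio_swap34 (p1 p2 p3 p4 : sphere) : distinct4 p1 p2 p3 p4 ->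
  cross_ratio p1 p2 p4 p3 = 1 - cross_ratio p1 p2 p3 p4.
Proof. intro D. distinct_brackets D. unfold cross_ratio. bracket_field. Qed.

Definition cr_cycle (l : C) : C := / (1 - l).

Lemma cross_ratio_cycle (p1 p2 p3 p4 : sphere) : distinct4 p1 p2 p3 p4 ->
  cross_ratio p2 p3 p1 p4 = cr_cycle (cross_ratio p1 p2 p3 p4).
Proof.
  intro D. unfold cr_cycle. rewrite one_sub_cross_ratio by exact D.
  distinct_brackets D. unfold cross_ratio. bracket_field.
Qed.

(** The coefficients of the Möbius map sending [x1], [x2], [x4] to [0], [1],
    [oo], i.e. [v |-> cross_ratio x1 x2 v x4]. *)
Definition frame_a (x1 x2 x4 : sphere) : C := hden x1 * bracket x2 x4.
Definition frame_b (x1 x2 x4 : sphere) : C := - hnum x1 * bracket x2 x4.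
Definition frame_c (x1 x2 x4 : sphere) : C := hden x4 * bracket x2 x1.
Definition frame_d (x1 x2 x4 : sphere) : C := - hnum x4 * bracket x2 x1.

Lemma frame_num (x1 x2 x4 v : sphere) :
  frame_a x1 x2 x4 * hnum v + frame_b x1 x2 x4 * hden v = bracket v x1 * bracket x2 x4.
Proof. unfold frame_a, frame_b, bracket. ring. Qed.

Lemma frame_den (x1 x2 x4 v : sphere) :
  frame_c x1 x2 x4 * hnum v + frame_d x1 x2 x4 * hden v = bracket v x4 * bracket x2 x1.
Proof. unfold frame_c, frame_d, bracket. ring. Qed.

Lemma frame_det (x1 x2 x4 : sphere) :
  frame_a x1 x2 x4 * frame_d x1 x2 x4 - frame_b x1 x2 x4 * frame_c x1 x2 x4
  = bracket x2 x4 * bracket x2 x1 * bracket x1 x4.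
Proof. unfold frame_a, frame_b, frame_c, frame_d, bracket. ring. Qed.

Lemma cross_ratio_frame (x1 x2 x3 x4 : sphere) : distinct4 x1 x2 x3 x4 ->
  cross_ratio x1 x2 x3 x4 = bracket x3 x1 * bracket x2 x4 / (bracket x3 x4 * bracket x2 x1).
Proof. intro D. distinct_brackets D. unfold cross_ratio. bracket_field. Qed.

(** * The shape in terms of the cross ratio *)

Definition abs_arg (w : C) : R := acos (Re w / Cmod w).

Lemma vec_angle_abs_arg (u v : C) : vec_angle u v = abs_arg (Cconj u * v).
Proof. unfold vec_angle, abs_arg. now rewrite Cmod_mult, Cmod_conj. Qed.

Lemma abs_arg_scal (k : R) (w : C) : (0 < k)%R -> w <> 0 -> abs_arg (RtoC k * w) = abs_arg w.
Proof.
  intros Hk Hw. apply Cmod_gt_0 in Hw. unfold abs_arg.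
  rewrite re_scal_l, Cmod_mult, Cmod_R, Rabs_pos_eq by lra.
  f_equal. field. lra.
Qed.

Lemma vec_angle_ratio (u v r : C) : u <> 0 -> v / u = r -> r <> 0 ->
  vec_angle u v = abs_arg r /\ (0 < Im (Cconj u * v) <-> 0 < Im r)%R.
Proof.
  intros Hu Hr Hr0.
  assert (E : Cconj u * v = RtoC (Cmod u ^ 2) * r).
  { rewrite Cmod2_conj, <- Hr. field. exact Hu. }
  assert (Hk : (0 < Cmod u ^ 2)%R) by (apply pow_lt, Cmod_gt_0, Hu).
  rewrite vec_angle_abs_arg, E, im_scal_l, abs_arg_scal by assumption.
  split; [reflexivity |]. split; intro H; nra.
Qed.

Definition chart_sign (p : sphere) : C := match p with Some _ => 1 | None => -1 end.

Lemma chart_sign_neq0 (p : sphere) : chart_sign p <> 0.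
Proof. destruct p; simpl; intro E; split_C E; lra. Qed.

Lemma arc_tangent_bracket (pi pj pl : sphere) : pi <> pj -> pi <> pl -> pj <> pl ->
  arc_tangent pi pj pl = chart_sign pi * (bracket pj pi * bracket pl pi / bracket pl pj).
Proof.
  intros Hij Hil Hjl.
  assert (Bji := bracket_neq0 pj pi (not_eq_sym Hij)).
  assert (Bli := bracket_neq0 pl pi (not_eq_sym Hil)).
  assert (Blj := bracket_neq0 pl pj (not_eq_sym Hjl)).
  destruct pi as [zi|], pj as [zj|], pl as [zl|];
    unfold arc_tangent, chart_sign, bracket, hnum, hden in *; try congruence;
    rewrite ?Cmult_1_r, ?Cmult_1_l, ?Cmult_0_r, ?Cmult_0_l in *;
    field; repeat split; try assumption; intro E; apply Ceq_minus in E; congruence.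
Qed.

Lemma arc_tangent_neq0 (pi pj pl : sphere) : pi <> pj -> pi <> pl -> pj <> pl ->
  arc_tangent pi pj pl <> 0.
Proof.
  intros Hij Hil Hjl. rewrite arc_tangent_bracket by assumption.
  brackets_neq0. assert (S := chart_sign_neq0 pi). C_nonzero.
Qed.

Lemma vertex_angle (pi pj pk pl : sphere) : distinct4 pi pj pk pl ->
  vec_angle (arc_tangent pi pj pl) (arc_tangent pi pk pl) = abs_arg (cross_ratio pi pj pk pl) /\
  (0 < Im (Cconj (arc_tangent pi pj pl) * arc_tangent pi pk pl)
   <-> 0 < Im (cross_ratio pi pj pk pl))%R.
Proof.
  intro D. apply vec_angle_ratio.
  - destruct D as (?&?&?&?&?&?). now apply arc_tangent_neq0.
  - destruct D as (?&?&?&?&?&?). rewrite !arc_tangent_bracket by assumption.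
    assert (S := chart_sign_neq0 pi). brackets_neq0.
    unfold cross_ratio. field. repeat split; auto.
  - now apply cross_ratio_neq0.
Qed.

Definition shape_of_cr (l : C) : R * R * R :=
  let a1 := abs_arg l in
  let a2 := abs_arg (cr_cycle l) in
  let a3 := abs_arg (cr_cycle (cr_cycle l)) in
  if Rlt_dec 0 (Im l) then (a1, a2, a3) else (a1, a3, a2).

Lemma shape_angles_cr (p1 p2 p3 p4 : sphere) : distinct4 p1 p2 p3 p4 ->
  shape_angles p1 p2 p3 p4 = shape_of_cr (cross_ratio p1 p2 p3 p4).
Proof.
  intro D.
  assert (D2 : distinct4 p2 p3 p1 p4) by (destruct D as (?&?&?&?&?&?); repeat split; auto).
  assert (D3 : distinct4 p3 p1 p2 p4) by (destruct D as (?&?&?&?&?&?); repeat split; auto).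
  destruct (vertex_angle p1 p2 p3 p4 D) as [V1 O1].
  destruct (vertex_angle p2 p3 p1 p4 D2) as [V2 _].
  destruct (vertex_angle p3 p1 p2 p4 D3) as [V3 _].
  rewrite cross_ratio_cycle in V2 by exact D.
  rewrite (cross_ratio_cycle p2 p3 p1 p4 D2), cross_ratio_cycle in V3 by exact D.
  unfold shape_angles, shape_of_cr. rewrite V1, V2, V3.
  destruct (Rlt_dec 0 (Im (cross_ratio p1 p2 p3 p4))), (Rlt_dec 0 _); tauto.
Qed.

(** * Invariance of the shape *)

Lemma C_neq0_of_Im (w : C) : Im w <> 0%R -> w <> 0.
Proof. intros H E. apply H. now rewrite E. Qed.

Lemma Im_one_sub (w : C) : Im (1 - w) = (- Im w)%R.
Proof. destruct w; simpl; ring. Qed.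

Lemma Im_Cinv_opposite (w : C) : Im w <> 0%R -> (Im (/ w) * Im w < 0)%R.
Proof.
  intro H.
  assert (E : Im (/ w) = (- Im w / (Re w ^ 2 + Im w ^ 2))%R) by (destruct w; reflexivity).
  assert (Q : (0 < Im w ^ 2)%R) by (apply pow2_gt_0; exact H).
  assert (P : (0 < Re w ^ 2 + Im w ^ 2)%R) by (assert (0 <= Re w ^ 2)%R by apply pow2_ge_0; lra).
  rewrite E. replace (- Im w / (Re w ^ 2 + Im w ^ 2) * Im w)%R
    with (- (Im w ^ 2 / (Re w ^ 2 + Im w ^ 2)))%R by (field; lra).
  assert (0 < Im w ^ 2 / (Re w ^ 2 + Im w ^ 2))%R by (apply Rdiv_lt_0_compat; assumption).
  lra.
Qed.

Lemma Im_cr_cycle_same_sign (l : C) : Im l <> 0%R -> (0 < Im (cr_cycle l) * Im l)%R.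
Proof.
  intro H. unfold cr_cycle.
  assert (X := Im_Cinv_opposite (1 - l)). rewrite Im_one_sub in X. nra.
Qed.

Lemma abs_arg_inv (w : C) : w <> 0 -> abs_arg (/ w) = abs_arg w.
Proof.
  intro H. assert (Hm : (0 < Cmod w)%R) by now apply Cmod_gt_0.
  assert (Hc : Cconj w <> 0).
  { intro E. apply H. rewrite <- (Cconj_conj w), E. apply injective_projections; simpl; lra. }
  replace (/ w) with (RtoC (/ (Cmod w ^ 2))%R * Cconj w).
  - rewrite abs_arg_scal by first [assumption | apply Rinv_0_lt_compat, pow_lt; lra].
    unfold abs_arg. now rewrite re_conj, Cmod_conj.
  - rewrite RtoC_inv, Cmod2_conj by (apply pow_nonzero; lra). field. now split.
Qed.

Section CrCycle.
Variable l : C.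
Hypotheses (Hl0 : l <> 0) (Hl1 : 1 - l <> 0).

Lemma cr_cycle_cycle : cr_cycle (cr_cycle l) = 1 - / l.
Proof. unfold cr_cycle. field. neq0_by_ring. Qed.

Lemma cr_cycle_order3 : cr_cycle (cr_cycle (cr_cycle l)) = l.
Proof. rewrite cr_cycle_cycle. unfold cr_cycle. field. neq0_by_ring. Qed.

Lemma cr_cycle_inv : cr_cycle (/ l) = / cr_cycle (cr_cycle l).
Proof. rewrite cr_cycle_cycle. unfold cr_cycle. field. neq0_by_ring. Qed.

Lemma cr_cycle_cycle_inv : cr_cycle (cr_cycle (/ l)) = / cr_cycle l.
Proof. unfold cr_cycle. field. neq0_by_ring. Qed.

Lemma one_sub_cr_cycle : 1 - l = / cr_cycle l.
Proof. unfold cr_cycle. field. exact Hl1. Qed.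

End CrCycle.

Lemma one_sub_neq0_of_Im (l : C) : Im l <> 0%R -> 1 - l <> 0.
Proof. intro H. apply C_neq0_of_Im. rewrite Im_one_sub. lra. Qed.

Lemma Im_cr_cycle_neq0 (l : C) : Im l <> 0%R -> Im (cr_cycle l) <> 0%R.
Proof. intros H E. assert (X := Im_cr_cycle_same_sign l H). rewrite E in X. lra. Qed.

Lemma shape_of_cr_inv (l : C) : Im l <> 0%R -> shape_of_cr (/ l) = shape_of_cr l.
Proof.
  intro H.
  assert (L0 := C_neq0_of_Im l H). assert (L1 := one_sub_neq0_of_Im l H).
  assert (H1 := Im_cr_cycle_neq0 l H). assert (H2 := Im_cr_cycle_neq0 _ H1).
  unfold shape_of_cr.
  rewrite cr_cycle_cycle_inv, cr_cycle_inv, !abs_arg_inv by auto using C_neq0_of_Im.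
  assert (X := Im_Cinv_opposite l H).
  destruct (Rlt_dec 0 (Im (/ l))), (Rlt_dec 0 (Im l)); reflexivity || nra.
Qed.

Lemma shape_of_cr_cycle (l : C) : Im l <> 0%R ->
  cyclic_eq (shape_of_cr l) (shape_of_cr (cr_cycle l)).
Proof.
  intro H.
  assert (L0 := C_neq0_of_Im l H). assert (L1 := one_sub_neq0_of_Im l H).
  assert (X := Im_cr_cycle_same_sign l H).
  unfold shape_of_cr. rewrite cr_cycle_order3 by assumption.
  destruct (Rlt_dec 0 (Im l)), (Rlt_dec 0 (Im (cr_cycle l))); simpl; auto; nra.
Qed.

Lemma shape_of_cr_one_sub (l : C) : Im l <> 0%R ->
  cyclic_eq (shape_of_cr l) (shape_of_cr (1 - l)).
Proof.
  intro H. rewrite one_sub_cr_cycle, shape_of_cr_inv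
    by auto using one_sub_neq0_of_Im, Im_cr_cycle_neq0.
  now apply shape_of_cr_cycle.
Qed.

Lemma cyclic_eq_refl (t : R * R * R) : cyclic_eq t t.
Proof. destruct t as [[a b] c]. now left. Qed.

Lemma cyclic_eq_trans (t t' t'' : R * R * R) :
  cyclic_eq t t' -> cyclic_eq t' t'' -> cyclic_eq t t''.
Proof.
  destruct t as [[a b] c], t' as [[a' b'] c'], t'' as [[a'' b''] c''].
  intros [H|[H|H]] [H'|[H'|H']]; injection H as -> -> ->; injection H' as -> -> ->;
    simpl; auto.
Qed.

Definition has_shape (t : R * R * R) (l : list sphere) : Prop :=
  NoDup l /\
  match l with
  | [x1; x2; x3; x4] =>
      Im (cross_ratio x1 x2 x3 x4) <> 0%R /\ cyclic_eq t (shape_of_cr (cross_ratio x1 x2 x3 x4))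
  | _ => False
  end.

Lemma has_shape_transposition (t : R * R * R) (x y : sphere) (l1 l2 : list sphere) :
  has_shape t (l1 ++ y :: x :: l2) -> has_shape t (l1 ++ x :: y :: l2).
Proof.
  intros [N H]. split.
  { eapply Permutation_NoDup; [apply Permutation_app_head, perm_swap | exact N]. }
  destruct l1 as [|a [|b [|c [|d l1]]]], l2 as [|u [|v [|w l2]]];
    cbn [app] in H |- *; try contradiction; try (destruct l1; contradiction).
  all: apply NoDup_distinct4 in N; destruct H as [I C].
  - rewrite cross_ratio_swap12, Im_one_sub by exact N. split; [lra |].
    eapply cyclic_eq_trans; [exact C | now apply shape_of_cr_one_sub].
  - rewrite cross_ratio_swap23, shape_of_cr_inv by exact N || exact I. split; [| exact C].
    assert (X := Im_Cinv_opposite _ I). intro E. rewrite E in X. lra.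
  - rewrite cross_ratio_swap34, Im_one_sub by exact N. split; [lra |].
    eapply cyclic_eq_trans; [exact C | now apply shape_of_cr_one_sub].
Qed.

Lemma has_shape_perm (t : R * R * R) (l l' : list sphere) :
  Permutation l l' -> has_shape t l -> has_shape t l'.
Proof.
  intro P. induction P using Permutation_ind_transp; auto using has_shape_transposition.
Qed.

Lemma shape_of_cr_perm (x1 x2 x3 x4 y1 y2 y3 y4 : sphere) :
  NoDup [x1; x2; x3; x4] -> Im (cross_ratio x1 x2 x3 x4) <> 0%R ->
  Permutation [x1; x2; x3; x4] [y1; y2; y3; y4] ->
  cyclic_eq (shape_of_cr (cross_ratio x1 x2 x3 x4)) (shape_of_cr (cross_ratio y1 y2 y3 y4)).
Proof.
  intros N I P.
  assert (S : has_shape (shape_of_cr (cross_ratio x1 x2 x3 x4)) [y1; y2; y3; y4]).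
  { apply (has_shape_perm _ _ _ P). split; [exact N |]. split; [exact I | apply cyclic_eq_refl]. }
  apply S.
Qed.

Lemma shape_of_cr_mobius_equivalent (p1 p2 p3 p4 q1 q2 q3 q4 : sphere) :
  NoDup [p1; p2; p3; p4] -> NoDup [q1; q2; q3; q4] -> Im (cross_ratio p1 p2 p3 p4) <> 0%R ->
  mobius_equivalent [p1; p2; p3; p4] [q1; q2; q3; q4] ->
  cyclic_eq (shape_of_cr (cross_ratio p1 p2 p3 p4)) (shape_of_cr (cross_ratio q1 q2 q3 q4)).
Proof.
  intros Np Nq Ip (a & b & c & d & Hdet & _ & Onto).
  destruct (Onto q1 ltac:(simpl; tauto)) as (x1 & I1 & <-).
  destruct (Onto q2 ltac:(simpl; tauto)) as (x2 & I2 & <-).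
  destruct (Onto q3 ltac:(simpl; tauto)) as (x3 & I3 & <-).
  destruct (Onto q4 ltac:(simpl; tauto)) as (x4 & I4 & <-).
  assert (Nx : NoDup [x1; x2; x3; x4]) by (eapply NoDup_map_inv; exact Nq).
  assert (Px : Permutation [x1; x2; x3; x4] [p1; p2; p3; p4]).
  { apply NoDup_Permutation_bis; [exact Nx | apply Nat.le_refl |].
    repeat (apply incl_cons; [assumption |]). apply incl_nil_l. }
  rewrite cross_ratio_mobius by auto using NoDup_distinct4.
  apply shape_of_cr_perm; auto using Permutation_sym.
Qed.

(** * General position *)

Section RealLocus.

Variables al be ga de : C.
Hypothesis Hdet : al * de - be * ga <> 0.

(** [v] is mapped into the extended real line by [v |-> (ga v + de) / (al v + be)]. *)
Definition on_real_locus (v : sphere) : Prop :=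
  Im (Cconj (al * hnum v + be * hden v) * (ga * hnum v + de * hden v)) = 0%R.

Let A : R := Im (Cconj al * ga).
Let B : C := Ci * Cconj (Cconj be * ga - al * Cconj de).
Let D : R := Im (Cconj be * de).

Lemma real_locus_finite (z : C) : on_real_locus (Some z) ->
  (A * (Re z ^ 2 + Im z ^ 2) + (Re B * Re z + Im B * Im z) + D = 0)%R.
Proof.
  unfold on_real_locus, hnum, hden. intro H. rewrite <- H.
  unfold A, B, D. destruct al, be, ga, de, z. simpl. ring.
Qed.

Lemma real_locus_infinity : on_real_locus None -> A = 0%R.
Proof.
  unfold on_real_locus, hnum, hden, A. now rewrite !Cmult_1_r, !Cmult_0_r, !Cplus_0_r.
Qed.

Lemma real_locus_discriminant_pos : (0 < Re B ^ 2 + Im B ^ 2 - 4 * A * D)%R.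
Proof.
  replace (Re B ^ 2 + Im B ^ 2 - 4 * A * D)%R with (Cmod (al * de - be * ga) ^ 2)%R.
  - apply pow_lt, Cmod_gt_0, Hdet.
  - rewrite Cmod2_alt. unfold A, B, D. destruct al, be, ga, de. simpl. ring.
Qed.

Lemma real_locus_line (v : sphere) : A = 0%R -> on_real_locus v -> on_line B (- D) v.
Proof.
  intros HA Hv. destruct v as [z|]; unfold on_line; [| exact I].
  apply real_locus_finite in Hv. rewrite HA in Hv. clearbody B.
  destruct B, z. simpl in *. lra.
Qed.

Lemma real_locus_circle (v : sphere) : A <> 0%R -> on_real_locus v ->
  on_circle ((- Re B / (2 * A))%R, (- Im B / (2 * A))%R)
            (sqrt ((Re B ^ 2 + Im B ^ 2 - 4 * A * D) / (4 * A ^ 2))) v.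
Proof.
  intros HA Hv. destruct v as [z|]; unfold on_circle.
  - apply real_locus_finite in Hv. unfold Cmod. f_equal.
    transitivity ((Re B ^ 2 + Im B ^ 2 - 4 * A * D) / (4 * A ^ 2)
                  + (A * (Re z ^ 2 + Im z ^ 2) + (Re B * Re z + Im B * Im z) + D) / A)%R.
    + clearbody A B D. destruct B, z. simpl. field. exact HA.
    + rewrite Hv. field. exact HA.
  - apply HA. now apply real_locus_infinity.
Qed.

Lemma real_locus_gcircle (P : list sphere) : List.Forall on_real_locus P -> on_common_gcircle P.
Proof.
  intro HP. assert (Disc := real_locus_discriminant_pos).
  destruct (Req_dec A 0) as [HA|HA].
  - right. exists B, (- D)%R. split.
    + intro E. rewrite E, HA in Disc. simpl in Disc. lra.
    + eapply List.Forall_impl; [| exact HP]. intros v. now apply real_locus_line.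
  - left. eexists _, _. split; [| eapply List.Forall_impl; [| exact HP]; intros v; now apply real_locus_circle].
    apply sqrt_lt_R0, Rdiv_lt_0_compat; [exact Disc |].
    assert (0 < A ^ 2)%R by (apply pow2_gt_0; exact HA). lra.
Qed.

End RealLocus.

Lemma Im_conj_real_mul (l w : C) : Im l = 0%R -> Im (Cconj (l * w) * w) = 0%R.
Proof. destruct l as [a b], w as [c d]. simpl. intros ->. ring. Qed.

Lemma cross_ratio_nonreal (p1 p2 p3 p4 : sphere) :
  general_position4 p1 p2 p3 p4 -> Im (cross_ratio p1 p2 p3 p4) <> 0%R.
Proof.
  intros [N NC] E. apply NC. apply NoDup_distinct4 in N.
  apply (real_locus_gcircle (frame_a p1 p2 p4) (frame_b p1 p2 p4) (frame_c p1 p2 p4) (frame_d p1 p2 p4)).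
  { rewrite frame_det. distinct_brackets N. C_nonzero. }
  assert (Locus : forall v l, Im l = 0%R ->
            bracket v p1 * bracket p2 p4 = l * (bracket v p4 * bracket p2 p1) ->
            on_real_locus (frame_a p1 p2 p4) (frame_b p1 p2 p4) (frame_c p1 p2 p4) (frame_d p1 p2 p4) v).
  { intros v l Hl Hv. unfold on_real_locus. rewrite frame_num, frame_den, Hv.
    now apply Im_conj_real_mul. }
  repeat constructor.
  - apply (Locus _ 0); [reflexivity | unfold bracket; ring].
  - apply (Locus _ 1); [reflexivity | unfold bracket; ring].
  - apply (Locus _ (cross_ratio p1 p2 p3 p4)); [exact E |].
    rewrite cross_ratio_frame by exact N. distinct_brackets N. field. auto.
  - unfold on_real_locus. rewrite frame_num, frame_den.
    replace (bracket p4 p4) with (RtoC 0) by (unfold bracket; ring).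
    rewrite Cmult_0_l, Cmult_0_r. reflexivity.
Qed.

(** * Equal shapes give equal cross ratios up to reordering *)

Lemma cos_abs_arg (w : C) : w <> 0 -> cos (abs_arg w) = (Re w / Cmod w)%R.
Proof.
  intro H. apply Cmod_gt_0 in H. apply cos_acos, Rabs_le_between.
  rewrite Rabs_div, (Rabs_pos_eq (Cmod w)) by lra.
  apply (Rmult_le_reg_r (Cmod w)); [exact H |].
  unfold Rdiv. rewrite Rmult_assoc, Rinv_l, Rmult_1_r, Rmult_1_l by lra. apply re_le_Cmod.
Qed.

(** In the upper half-plane [abs_arg] is the argument. *)
Lemma abs_arg_upper_ray (u v : C) : (0 < Im u)%R -> (0 < Im v)%R ->
  abs_arg u = abs_arg v -> exists t : R, (0 < t)%R /\ v = RtoC t * u.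
Proof.
  intros Pu Pv E.
  assert (Hu := C_neq0_of_Im u ltac:(lra)). assert (Hv := C_neq0_of_Im v ltac:(lra)).
  assert (Mu : (0 < Cmod u)%R) by now apply Cmod_gt_0.
  assert (Mv : (0 < Cmod v)%R) by now apply Cmod_gt_0.
  assert (Rc : (Re u / Cmod u = Re v / Cmod v)%R) by now rewrite <- !cos_abs_arg, E.
  set (t := (Cmod v / Cmod u)%R).
  assert (Ht : (0 < t)%R) by (apply Rdiv_lt_0_compat; assumption).
  assert (Rv : Re v = (t * Re u)%R).
  { unfold t. apply (Rmult_eq_reg_r (/ Cmod v)); [| apply Rinv_neq_0_compat; lra].
    change (Re v * / Cmod v)%R with (Re v / Cmod v)%R. rewrite <- Rc. field. lra. }
  assert (Iv2 : (Im v ^ 2 = (t * Im u) ^ 2)%R).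
  { assert (Cu := Cmod2_alt u). assert (Cv := Cmod2_alt v).
    replace (Cmod v) with (t * Cmod u)%R in Cv by (unfold t; field; lra).
    rewrite Rv in Cv. nra. }
  assert (Iv : Im v = (t * Im u)%R).
  { assert (0 < t * Im u)%R by now apply Rmult_lt_0_compat.
    assert (F : ((Im v - t * Im u) * (Im v + t * Im u) = 0)%R) by nra.
    apply Rmult_integral in F. lra. }
  exists t. split; [exact Ht |].
  apply injective_projections; simpl; [change (fst v) with (Re v) | change (snd v) with (Im v)];
    [rewrite Rv | rewrite Iv]; unfold Re, Im; ring.
Qed.

Lemma Im_cr_cycle_pos (l : C) : (0 < Im l)%R -> (0 < Im (cr_cycle l))%R.
Proof. intro H. assert (X := Im_cr_cycle_same_sign l ltac:(lra)). nra. Qed.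

(** [abs_arg (cr_cycle u)] fixes the direction of [1 - u], i.e. the ray from
    [1] through [u], which meets the ray from [0] through [u] only at [u]. *)
Lemma abs_arg_upper_inj (u v : C) : (0 < Im u)%R -> (0 < Im v)%R ->
  abs_arg u = abs_arg v -> abs_arg (cr_cycle u) = abs_arg (cr_cycle v) -> u = v.
Proof.
  intros Pu Pv E1 E2.
  destruct (abs_arg_upper_ray u v Pu Pv E1) as (t & Ht & ->).
  destruct (abs_arg_upper_ray _ _ (Im_cr_cycle_pos u Pu) (Im_cr_cycle_pos _ Pv) E2)
    as (s & Hs & Es).
  assert (N1 := one_sub_neq0_of_Im u ltac:(lra)).
  assert (N2 := one_sub_neq0_of_Im (RtoC t * u) ltac:(lra)).
  unfold cr_cycle in Es.
  assert (Es' : 1 - u = RtoC s * (1 - RtoC t * u)).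
  { transitivity ((1 - u) * (1 - RtoC t * u) * / (1 - RtoC t * u)); [field; exact N2 |].
    rewrite Es. field. exact N1. }
  destruct u as [x y]. split_C Es'. simpl in *.
  assert (St : ((s * t - 1) * y = 0)%R) by lra.
  apply Rmult_integral in St. destruct St as [St | St]; [| lra].
  assert (s * t * x = x)%R by (replace (s * t)%R with 1%R by lra; ring).
  assert (s = 1)%R by lra. subst s. replace t with 1%R by lra.
  apply injective_projections; simpl; ring.
Qed.

Lemma shape_of_cr_upper_cyclic (l m : C) : (0 < Im l)%R -> (0 < Im m)%R ->
  cyclic_eq (shape_of_cr l) (shape_of_cr m) -> m = l \/ m = cr_cycle l \/ l = cr_cycle m.
Proof.
  intros Pl Pm C.
  assert (L0 := C_neq0_of_Im l ltac:(lra)). assert (L1 := one_sub_neq0_of_Im l ltac:(lra)).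
  assert (P1 := Im_cr_cycle_pos l Pl). assert (P2 := Im_cr_cycle_pos _ P1).
  unfold shape_of_cr in C.
  destruct (Rlt_dec 0 (Im l)); [| lra]. destruct (Rlt_dec 0 (Im m)); [| lra].
  destruct C as [E|[E|E]]; injection E as E1 E2 E3.
  - left. now apply abs_arg_upper_inj.
  - right; left. now apply abs_arg_upper_inj.
  - right; right.
    assert (Em : m = cr_cycle (cr_cycle l)).
    { apply abs_arg_upper_inj; rewrite ?cr_cycle_order3; assumption. }
    rewrite Em, cr_cycle_order3 by assumption. reflexivity.
Qed.

(** * Möbius maps with prescribed values *)

(** The map [F_y^-1 o F_x], [F_x] being the frame map of [x1], [x2], [x4]: its
    matrix is the adjugate of the frame matrix of [y] times that of [x]. *)
Lemma mobius_frame_change (x1 x2 x4 y1 y2 y4 : sphere) :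
  x1 <> x2 -> x1 <> x4 -> x2 <> x4 -> y1 <> y2 -> y1 <> y4 -> y2 <> y4 ->
  exists a b c d : C, a * d - b * c <> 0 /\
    (forall v w : sphere,
       bracket v x1 * bracket x2 x4 * (bracket w y4 * bracket y2 y1)
       - bracket v x4 * bracket x2 x1 * (bracket w y1 * bracket y2 y4) = 0 ->
       mobius_app a b c d v = w).
Proof.
  intros H12 H14 H24 K12 K14 K24.
  set (ax := frame_a x1 x2 x4). set (bx := frame_b x1 x2 x4).
  set (cx := frame_c x1 x2 x4). set (dx := frame_d x1 x2 x4).
  set (ay := frame_a y1 y2 y4). set (by_ := frame_b y1 y2 y4).
  set (cy := frame_c y1 y2 y4). set (dy := frame_d y1 y2 y4).
  exists (dy * ax - by_ * cx), (dy * bx - by_ * dx), (- cy * ax + ay * cx), (- cy * bx + ay * dx).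
  assert (Hdet : (dy * ax - by_ * cx) * (- cy * bx + ay * dx)
                 - (dy * bx - by_ * dx) * (- cy * ax + ay * cx)
                 = (ay * dy - by_ * cy) * (ax * dx - bx * cx)) by ring.
  assert (Hdet0 : (ay * dy - by_ * cy) * (ax * dx - bx * cx) <> 0).
  { unfold ax, bx, cx, dx, ay, by_, cy, dy. rewrite !frame_det. brackets_neq0. C_nonzero. }
  rewrite Hdet in *. split; [exact Hdet0 |].
  intros v w Z. apply bracket_eq0.
  destruct (mobius_scale_exists (dy * ax - by_ * cx) (dy * bx - by_ * dx)
              (- cy * ax + ay * cx) (- cy * bx + ay * dx) v) as (k & _ & Hn & Hd).
  { now rewrite Hdet. }
  unfold bracket at 1. rewrite Hn, Hd.
  transitivity (k * 0); [rewrite <- Z | ring].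
  rewrite <- (frame_num x1 x2 x4 v), <- (frame_den x1 x2 x4 v),
    <- (frame_num y1 y2 y4 w), <- (frame_den y1 y2 y4 w).
  fold ax bx cx dx ay by_ cy dy. ring.
Qed.

Lemma mobius_of_cross_ratio_eq (x1 x2 x3 x4 y1 y2 y3 y4 : sphere) :
  distinct4 x1 x2 x3 x4 -> distinct4 y1 y2 y3 y4 ->
  cross_ratio x1 x2 x3 x4 = cross_ratio y1 y2 y3 y4 ->
  exists a b c d : C, a * d - b * c <> 0 /\
    map (mobius_app a b c d) [x1; x2; x3; x4] = [y1; y2; y3; y4].
Proof.
  intros Dx Dy E.
  destruct (mobius_frame_change x1 x2 x4 y1 y2 y4) as (a & b & c & d & Hdet & Key);
    try (destruct Dx as (?&?&?&?&?&?); assumption);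
    try (destruct Dy as (?&?&?&?&?&?); assumption).
  exists a, b, c, d. split; [exact Hdet |].
  simpl. repeat f_equal; apply Key.
  - unfold bracket. ring.
  - unfold bracket. ring.
  - rewrite !cross_ratio_frame in E by assumption.
    distinct_brackets Dx. distinct_brackets Dy.
    transitivity (bracket x3 x4 * bracket x2 x1 * (bracket y3 y4 * bracket y2 y1) *
      (bracket x3 x1 * bracket x2 x4 / (bracket x3 x4 * bracket x2 x1)
       - bracket y3 y1 * bracket y2 y4 / (bracket y3 y4 * bracket y2 y1))).
    + field. auto.
    + rewrite E. ring.
  - unfold bracket. ring.
Qed.

Lemma mobius_equivalent_of_map (a b c d : C) (x y P Q : list sphere) :
  a * d - b * c <> 0 -> map (mobius_app a b c d) x = y ->
  Permutation x P -> Permutation y Q -> mobius_equivalent P Q.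
Proof.
  intros Hdet Hxy HxP HyQ. exists a, b, c, d. split; [exact Hdet | split].
  - intros u Hu. apply (Permutation_in _ HyQ). rewrite <- Hxy. apply in_map.
    exact (Permutation_in _ (Permutation_sym HxP) Hu).
  - intros w Hw. apply (Permutation_in _ (Permutation_sym HyQ)) in Hw.
    rewrite <- Hxy in Hw. apply in_map_iff in Hw. destruct Hw as (u & Hu & Hux).
    exists u. split; [exact (Permutation_in _ HxP Hux) | exact Hu].
Qed.

Lemma mobius_equivalent_of_cross_ratio_eq (x1 x2 x3 x4 y1 y2 y3 y4 : sphere) (P Q : list sphere) :
  NoDup [x1; x2; x3; x4] -> NoDup [y1; y2; y3; y4] ->
  cross_ratio x1 x2 x3 x4 = cross_ratio y1 y2 y3 y4 ->
  Permutation [x1; x2; x3; x4] P -> Permutation [y1; y2; y3; y4] Q -> mobius_equivalent P Q.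
Proof.
  intros Nx Ny E HxP HyQ.
  destruct (mobius_of_cross_ratio_eq x1 x2 x3 x4 y1 y2 y3 y4) as (a & b & c & d & Hdet & Hmap);
    auto using NoDup_distinct4.
  exact (mobius_equivalent_of_map a b c d _ _ P Q Hdet Hmap HxP HyQ).
Qed.

Lemma Permutation_cycle3 {A : Type} (a b c d : A) : Permutation [b; c; a; d] [a; b; c; d].
Proof. apply Permutation_sym. eapply perm_trans; [apply perm_swap | apply perm_skip, perm_swap]. Qed.

Lemma exists_upper_reordering (x1 x2 x3 x4 : sphere) :
  NoDup [x1; x2; x3; x4] -> Im (cross_ratio x1 x2 x3 x4) <> 0%R ->
  exists y1 y2 y3 y4, Permutation [y1; y2; y3; y4] [x1; x2; x3; x4] /\
    (0 < Im (cross_ratio y1 y2 y3 y4))%R /\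
    shape_of_cr (cross_ratio y1 y2 y3 y4) = shape_of_cr (cross_ratio x1 x2 x3 x4).
Proof.
  intros N I. destruct (Rlt_dec 0 (Im (cross_ratio x1 x2 x3 x4))) as [Pos | NPos].
  - exists x1, x2, x3, x4. auto.
  - exists x1, x3, x2, x4.
    rewrite cross_ratio_swap23 by now apply NoDup_distinct4.
    split; [apply perm_skip, perm_swap | split; [| now apply shape_of_cr_inv]].
    assert (X := Im_Cinv_opposite _ I). nra.
Qed.

Lemma mobius_equivalent_of_shape (p1 p2 p3 p4 q1 q2 q3 q4 : sphere) :
  NoDup [p1; p2; p3; p4] -> NoDup [q1; q2; q3; q4] ->
  Im (cross_ratio p1 p2 p3 p4) <> 0%R -> Im (cross_ratio q1 q2 q3 q4) <> 0%R ->
  cyclic_eq (shape_of_cr (cross_ratio p1 p2 p3 p4)) (shape_of_cr (cross_ratio q1 q2 q3 q4)) ->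
  mobius_equivalent [p1; p2; p3; p4] [q1; q2; q3; q4].
Proof.
  intros Np Nq Ip Iq C.
  destruct (exists_upper_reordering _ _ _ _ Np Ip) as (x1 & x2 & x3 & x4 & Px & Ux & Sx).
  destruct (exists_upper_reordering _ _ _ _ Nq Iq) as (y1 & y2 & y3 & y4 & Py & Uy & Sy).
  assert (Nx := Permutation_NoDup (Permutation_sym Px) Np).
  assert (Ny := Permutation_NoDup (Permutation_sym Py) Nq).
  rewrite <- Sx, <- Sy in C.
  destruct (shape_of_cr_upper_cyclic _ _ Ux Uy C) as [E | [E | E]].
  - exact (mobius_equivalent_of_cross_ratio_eq _ _ _ _ _ _ _ _ _ _ Nx Ny (eq_sym E) Px Py).
  - rewrite <- cross_ratio_cycle in E by now apply NoDup_distinct4.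
    apply (mobius_equivalent_of_cross_ratio_eq x2 x3 x1 x4 y1 y2 y3 y4); auto.
    + eapply Permutation_NoDup; [apply Permutation_sym, Permutation_cycle3 | exact Nx].
    + eapply perm_trans; [apply Permutation_cycle3 | exact Px].
  - rewrite <- cross_ratio_cycle in E by now apply NoDup_distinct4.
    apply (mobius_equivalent_of_cross_ratio_eq x1 x2 x3 x4 y2 y3 y1 y4); auto.
    + eapply Permutation_NoDup; [apply Permutation_sym, Permutation_cycle3 | exact Ny].
    + eapply perm_trans; [apply Permutation_cycle3 | exact Py].
Qed.

Theorem theorem1p6 (p1 p2 p3 p4 q1 q2 q3 q4 : sphere) :
  general_position4 p1 p2 p3 p4 ->
  general_position4 q1 q2 q3 q4 ->
  (mobius_equivalent [p1; p2; p3; p4] [q1; q2; q3; q4] <->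
   cyclic_eq (shape_angles p1 p2 p3 p4) (shape_angles q1 q2 q3 q4)).
Proof.
  intros GP GQ.
  assert (Ip := cross_ratio_nonreal _ _ _ _ GP).
  assert (Iq := cross_ratio_nonreal _ _ _ _ GQ).
  destruct GP as [Np _], GQ as [Nq _].
  rewrite !shape_angles_cr by now apply NoDup_distinct4.
  split.
  - now apply shape_of_cr_mobius_equivalent.
  - now apply mobius_equivalent_of_shape.
Qed.
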